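(* Fix $s,z>0$ and define $$c_{s,z}=\min\Big\{\Big|1-\frac{s}{z}\Big|,1\Big\},\qquad t_{s,z}=(1+c_{s,z})s,$$ $$g_{s,z}(a)=\begin{cases}\max\{z-a,\min\{s-z,z\}\}&a\le s\\ 0&a>s,\end{cases}\qquad h_{s,z}(a)=\begin{cases}z& a\le c_{s,z}s\\ \frac{z}{s}\big(s-(a-c_{s,z}s)\big)& a>c_{s,z}s.\end{cases}$$ Then (i) $\displaystyle\int_0^{t_{s,z}}\frac{da}{1-\rho_Z(g_{s,z}(a))}=\mathbb{E}[T^{\mathrm{res}}_{\mathrm{SRPT\text{-}B}}(s,z)]+c_{s,z}s$; (ii) $\displaystyle\int_0^{t_{s,z}}\frac{da}{1-\rho_Z(h_{s,z}(a))}=\mathbb{E}[T^{\mathrm{res}}_{\mathrm{SRPT\text{-}SE}}(s,z)]+c_{s,z}\,\mathbb{E}[T^{\mathrm{res}}_{\mathrm{PSJF\text{-}E}}(s,z)]$; (iii) $g_{s,z}(a)\le h_{s,z}(a)$ for all $a\in(0,t_{s,z})$.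
   Context: Model: M/G/1 queue (Poisson arrivals of rate $\lambda$, single preemptive server of rate 1) in which each job has i.i.d. (true size, estimated size) pair distributed as $(S,Z)$ with a joint density; $0<\rho=\lambda\mathbb{E}[S]<1$. $\rho_Z(x)=\lambda\mathbb{E}[S\mathbf{1}(Z\le x)]$ (so $\rho_Z(x)=0$ for $x\le0$). Policies are defined by rank functions on states $(s,z,a)$ (age $a$), the job of least rank being served: SRPT-B: $\min\{|z-a|,z\}$; SRPT-SE: $\frac{z}{s}(s-a)$; PSJF-E: $z$. Worst future rank: $w_\pi(s,z,a)=\sup_{b\in[a,s)}r_\pi(s,z,b)$. Residence time of a tagged job is the time from its first service to its completion; $T^{\mathrm{res}}_\pi(s,z)$ is the residence time under $\pi$ of a tagged job with true size $s$ and estimated size $z$ arriving in steady state. Known fact (cited, may be used): for $\pi\in\{\text{SRPT-B},\text{SRPT-SE},\text{PSJF-E}\}$, $\mathbb{E}[T^{\mathrm{res}}_\pi(s,z)]=\int_0^s\frac{da}{1-\rho_Z(w_\pi(s,z,a))}$. *)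

From HB Require Import structures.
From mathcomp Require Import all_boot all_order all_algebra.
From mathcomp Require Import all_classical all_reals all_analysis.
Set Implicit Arguments. Unset Strict Implicit. Unset Printing Implicit Defensive.
Import Order.TTheory GRing.Theory Num.Theory.
Import numFieldNormedType.Exports.
Local Open Scope classical_set_scope.
Local Open Scope ring_scope.

(* The joint law of a job's (true size S, estimated size Z) is a probability
   measure [mu] on R * R; a point p of R * R is read as p = (S, Z). *)

Definition rhoZ (R : realType) (mu : {measure set (R * R)%type -> \bar R})
  (lam x : R) : R :=
  lam * fine (\int[mu]_(p in [set p : R * R | (p.2 <= x)%R]) (p.1)%:E)%E.

Inductive policy := SRPT_B | SRPT_SE | PSJF_E.

Definition rank (R : realType) (pi : policy) (s z a : R) : R :=
  match pi with
  | SRPT_B => Num.min `|z - a| z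
  | SRPT_SE => z / s * (s - a)
  | PSJF_E => z
  end.

Definition worst_rank (R : realType) (pi : policy) (s z a : R) : R :=
  sup [set rank pi s z b | b in `[a, s[%classic].

(* Expected residence time E[T^res_pi(s, z)], given by the cited known
   formula  int_0^s da / (1 - rho_Z(w_pi(s, z, a))). *)
Definition ETres (R : realType) (mu : {measure set (R * R)%type -> \bar R})
  (lam : R) (pi : policy) (s z : R) : \bar R :=
  (\int[lebesgue_measure]_(a in `[0%R, s]%classic)
     ((1 - rhoZ mu lam (worst_rank pi s z a))^-1)%:E)%E.

Definition c_sz (R : realType) (s z : R) : R := Num.min `|1 - s / z| 1.
Definition t_sz (R : realType) (s z : R) : R := (1 + c_sz s z) * s.

Definition g_sz (R : realType) (s z a : R) : R :=
  if a <= s then Num.max (z - a) (Num.min (s - z) z) else 0.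

Definition h_sz (R : realType) (s z a : R) : R :=
  if a <= c_sz s z * s then z
  else z / s * (s - (a - c_sz s z * s)).

Definition has_joint_density (R : realType)
  (mu : {measure set (R * R)%type -> \bar R}) : Prop :=
  exists f : R * R -> R,
    (forall p, 0 <= f p) /\ measurable_fun setT f /\
    forall A, measurable A ->
      mu A = (\int[(@lebesgue_measure R) \x (@lebesgue_measure R)]_(p in A) (f p)%:E)%E.

From HB Require Import structures.
From mathcomp Require Import all_boot all_order all_algebra.
From mathcomp Require Import all_classical all_reals all_analysis.
From mathcomp Require Import ring lra measurable_realfun.
Import Order.TTheory GRing.Theory Num.Theory.
Import numFieldNormedType.Exports.
Local Open Scope classical_set_scope.
Local Open Scope ring_scope.

(* Below age s the worst future ranks are explicit: max(z - a, min(s - z, z)) = g(a)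
   for SRPT-B, the line (z/s)(s - a) for SRPT-SE and the constant z for PSJF-E.
   Hence on [0, s] the integrand of (i) is the SRPT-B one, while on (s, t] the rank
   is 0 and rho_Z(0) = 0 because Z > 0 a.s., which contributes c s.  In (ii), h is
   z on [0, c s], contributing c times the PSJF-E integral, and on (c s, t] it is the
   SRPT-SE worst rank shifted by c s, so translation invariance of Lebesgue measure
   gives the SRPT-SE integral.  Beyond rho_Z(0) = 0 only rho_Z < 1 and monotonicity
   of rho_Z (hence measurability of the integrands) are needed.  Part (iii) compares
   two piecewise linear functions, using c z = min(|s - z|, z). *)

Lemma sup_eq_ub_approx (R : realType) (E : set R) (v : R) :
  (forall x, E x -> x <= v) -> (forall e, 0 < e -> exists2 x, E x & v - e < x) ->
  sup E = v.
Proof.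
move=> ub approx.
have E0 : E !=set0 by have [x Ex _] := approx 1 ltr01; exists x.
have ubv : ubound E v by move=> x /ub.
apply/eqP; rewrite eq_le (ge_sup E0 ubv) /=.
rewrite leNgt; apply/negP => supE_lt_v.
have [x Ex] := approx (v - sup E) ltac:(by rewrite subr_gt0).
rewrite opprB addrCA subrr addr0 => supE_lt_x.
have : x <= sup E by apply: ub_le_sup => //; exists v.
by rewrite leNgt supE_lt_x.
Qed.

Lemma integral_setD_null d (T : measurableType d) (R : realType)
    (mu : {measure set T -> \bar R}) (A N : set T) (f : T -> \bar R) :
  measurable A -> measurable N -> mu N = 0%E -> measurable_fun A f ->
  (\int[mu]_(x in A) f x = \int[mu]_(x in A `\` N) f x)%E.
Proof.
move=> mA mN N0 mf.
have AE : A = (A `\` N) `|` (A `&` N).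
  apply/seteqP; split => [x Ax|x [[]|[]]//].
  by have [Nx|Nx] := pselect (N x); [right|left].
have mAN : measurable (A `&` N) by exact: measurableI.
have AN0 : mu (A `&` N) = 0%E.
  by apply: (subset_measure0 _ _ _ N0) => //; exact: subIsetr.
rewrite [in LHS]AE integral_setU //; first last.
- by rewrite disj_set2E; apply/eqP/seteqP; split => x // [[_ ?] [_ ?]].
- by rewrite -AE.
- exact: measurableD.
rewrite (@null_set_integral _ _ _ _ (A `&` N)) ?adde0 //.
exact: measurable_funS mA (@subIsetl _ _ _) mf.
Qed.

Lemma measurable_fst_le {R : realType} (x : R) :
  measurable [set p : R * R | p.1 <= x].
Proof.
rewrite (_ : [set p : R * R | p.1 <= x] = setT `&` fst @^-1` `]-oo, x]).
  exact: measurable_fst _ (measurable_itv _).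
by apply/seteqP; split => p /=; rewrite in_itv /= ?andbT //; case.
Qed.

Lemma measurable_snd_le {R : realType} (x : R) :
  measurable [set p : R * R | p.2 <= x].
Proof.
rewrite (_ : [set p : R * R | p.2 <= x] = setT `&` snd @^-1` `]-oo, x]).
  exact: measurable_snd _ (measurable_itv _).
by apply/seteqP; split => p /=; rewrite in_itv /= ?andbT //; case.
Qed.

Lemma measurable_fun_fst_EFin {R : realType} (D : set (R * R)) :
  measurable_fun D (fun p : R * R => (p.1)%:E).
Proof. by apply/measurable_EFinP; apply: measurable_funTS; exact: measurable_fst. Qed.

Section rhoZ_properties.
Variables (R : realType) (mu : {measure set (R * R)%type -> \bar R}) (lam : R).
Hypotheses (lam_gt0 : 0 < lam) (S_pos : mu [set p : R * R | p.1 <= 0] = 0%E).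
Hypothesis rho_lt1 : (lam%:E * \int[mu]_(p in setT) (p.1)%:E < 1%:E)%E.

Lemma fst_integral_setD_nonpos (A : set (R * R)) : measurable A ->
  (\int[mu]_(p in A) (p.1)%:E =
   \int[mu]_(p in A `\` [set p : R * R | (p.1 <= 0)%R]) (p.1)%:E)%E.
Proof.
move=> mA; apply: integral_setD_null => //; first exact: measurable_fst_le.
exact: measurable_fun_fst_EFin.
Qed.

Lemma fst_integral_ge0 (A : set (R * R)) : measurable A ->
  (0 <= \int[mu]_(p in A) (p.1)%:E)%E.
Proof.
move=> mA; rewrite fst_integral_setD_nonpos //.
by apply: integral_ge0 => p [_ /negP]; rewrite -ltNge lee_fin => /ltW.
Qed.

Lemma le_fst_integral (A B : set (R * R)) : measurable A -> measurable B ->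
  A `<=` B -> (\int[mu]_(p in A) (p.1)%:E <= \int[mu]_(p in B) (p.1)%:E)%E.
Proof.
move=> mA mB AB; have mN := @measurable_fst_le R 0.
rewrite (fst_integral_setD_nonpos _ mA) (fst_integral_setD_nonpos _ mB).
apply: ge0_subset_integral; try exact: measurableD.
- exact: measurable_fun_fst_EFin.
- by move=> p [_ /negP]; rewrite -ltNge lee_fin => /ltW.
- by move=> p [/AB Bp Np].
Qed.

Lemma fst_integral_fin_num (A : set (R * R)) : measurable A ->
  (\int[mu]_(p in A) (p.1)%:E)%E \is a fin_num.
Proof.
move=> mA; rewrite ge0_fin_numE ?fst_integral_ge0 //.
apply: (le_lt_trans (le_fst_integral _ _ mA measurableT (@subsetT _ _))).
rewrite ltNge leye_eq; apply/negP => /eqP ES_oo.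
by move: rho_lt1; rewrite ES_oo gt0_muley ?lte_fin.
Qed.

Lemma rhoZ_nondecreasing x y : x <= y -> rhoZ mu lam x <= rhoZ mu lam y.
Proof.
move=> xy; apply: ler_wpM2l; first exact: ltW.
apply: fine_le; try exact: fst_integral_fin_num _ (measurable_snd_le _).
apply: le_fst_integral; try exact: measurable_snd_le.
by move=> p /= /le_trans; apply.
Qed.

Lemma rhoZ_lt1 x : rhoZ mu lam x < 1.
Proof.
have ES_fin := fst_integral_fin_num _ measurableT.
apply: (@le_lt_trans _ _ (lam * fine (\int[mu]_(p in setT) (p.1)%:E)%E)).
  apply: ler_wpM2l; first exact: ltW.
  apply: fine_le => //; first exact: fst_integral_fin_num _ (measurable_snd_le _).
  exact: le_fst_integral _ _ (measurable_snd_le _) measurableT (@subsetT _ _).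
by move: rho_lt1; rewrite -(fineK ES_fin) -EFinM lte_fin.
Qed.

End rhoZ_properties.

Lemma rhoZ0 (R : realType) (mu : {measure set (R * R)%type -> \bar R}) (lam : R) :
  mu [set p : R * R | p.2 <= 0] = 0%E -> rhoZ mu lam 0 = 0.
Proof.
move=> Z_pos; rewrite /rhoZ null_set_integral ?mulr0 //.
  exact: measurable_snd_le.
exact: measurable_fun_fst_EFin.
Qed.

Ltac case_norm_min_max := repeat match goal with
  | |- context [`|?x|] => let h := fresh in have [h|h] := leP 0 x;
      [rewrite (ger0_norm h); move: h | rewrite (ltr0_norm h); move: h]
  | |- context [@Order.min _ _ ?x ?y] => let h := fresh in have [h|h] := leP x y; move: h
  | |- context [@Order.max _ _ ?x ?y] => let h := fresh in have [h|h] := leP x y; move: h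
  end; move=> *.

Section worst_ranks.
Variables (R : realType) (s z : R).

Lemma worst_rank_SRPT_B a : 0 < s -> 0 < z -> 0 <= a < s ->
  worst_rank SRPT_B s z a = Num.max (z - a) (Num.min (s - z) z).
Proof.
move=> s_gt0 z_gt0 /andP[a_ge0 a_lt_s]; apply: sup_eq_ub_approx.
  move=> r [b]; rewrite /= in_itv /= => /andP[ab bs] <-; rewrite /rank.
  by case_norm_min_max; lra.
move=> e e_gt0.
have [late|early] := leP (Num.min (s - z) z) (z - a).
  exists (rank SRPT_B s z a); first by exists a => //; rewrite /= in_itv /= lexx a_lt_s.
  by move: late; rewrite /rank; case_norm_min_max; lra.
(* here the supremum min(s - z, z) is not attained, only approached as b -> s *)
pose b := Num.max a (s - Num.min e (s - z) / 2).
exists (rank SRPT_B s z b).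
  exists b => //; rewrite /= in_itv /=; apply/andP; split;
  by move: early; rewrite /b; case_norm_min_max; lra.
by move: early; rewrite /rank /b; case_norm_min_max; lra.
Qed.

Lemma worst_rank_SRPT_SE a : 0 < s -> 0 < z -> a < s ->
  worst_rank SRPT_SE s z a = z / s * (s - a).
Proof.
move=> s_gt0 z_gt0 a_lt_s; apply: sup_eq_ub_approx.
  move=> r [b]; rewrite /= in_itv /= => /andP[ab bs] <-; rewrite /rank.
  by apply: ler_wpM2l; [rewrite divr_ge0 // ltW | lra].
move=> e e_gt0; exists (rank SRPT_SE s z a); last by rewrite /rank; lra.
by exists a => //; rewrite /= in_itv /= lexx a_lt_s.
Qed.

Lemma worst_rank_PSJF_E a : a < s -> worst_rank PSJF_E s z a = z.
Proof.
move=> a_lt_s; apply: sup_eq_ub_approx; first by move=> r [b] _ <-.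
move=> e e_gt0; exists (rank PSJF_E s z a); last by rewrite /rank; lra.
by exists a => //; rewrite /= in_itv /= lexx a_lt_s.
Qed.

End worst_ranks.

Section c_g_h_sz.
Variables (R : realType) (s z : R).

Lemma c_sz_ge0 : 0 <= c_sz s z.
Proof. by rewrite /c_sz; case_norm_min_max; lra. Qed.

Lemma c_sz_le1 : c_sz s z <= 1.
Proof. by rewrite /c_sz; case_norm_min_max; lra. Qed.

Lemma c_szMz : 0 < s -> 0 < z -> c_sz s z * z = Num.min `|s - z| z.
Proof.
move=> s_gt0 z_gt0; rewrite /c_sz.
have qz : s / z * z = s by rewrite divfK // gt_eqF.
set q := s / z in qz *.
have -> : s - z = (q - 1) * z by rewrite mulrBl qz mul1r.
by case_norm_min_max; nra.
Qed.

Lemma g_sz_nonincreasing x y : 0 < z -> x <= y -> g_sz s z y <= g_sz s z x.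
Proof.
move=> z_gt0 xy; rewrite /g_sz.
by have [ys|ys] := leP y s; have [xs|xs] := leP x s; case_norm_min_max; lra.
Qed.

Lemma h_sz_nonincreasing x y : 0 < s -> 0 < z -> x <= y ->
  h_sz s z y <= h_sz s z x.
Proof.
move=> s_gt0 z_gt0 xy; rewrite /h_sz.
have hE v : z / s * (s - (v - c_sz s z * s)) = z + z / s * (c_sz s z * s) - z / s * v.
  by rewrite mulrBr divfK ?gt_eqF //; ring.
rewrite !hE.
have k_gt0 : 0 < z / s by rewrite divr_gt0.
set k := z / s in k_gt0 *; set c := c_sz s z.
have kxy : k * x <= k * y by rewrite ler_pM2l.
have [ycs|ycs] := leP y (c * s); have [xcs|xcs] := leP x (c * s); try lra.
have : k * (c * s) <= k * y by rewrite ler_pM2l // ltW.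
lra.
Qed.

Lemma g_sz_le_h_sz a : 0 < s -> 0 < z -> 0 < a < t_sz s z ->
  g_sz s z a <= h_sz s z a.
Proof.
move=> s_gt0 z_gt0 /andP[a_gt0 a_lt_t].
have cz := c_szMz s_gt0 z_gt0; have c_ge0 := c_sz_ge0; have c_le1 := c_sz_le1.
rewrite /g_sz /h_sz; rewrite /t_sz in a_lt_t.
set c := c_sz s z in cz c_ge0 c_le1 a_lt_t *.
have -> : z / s * (s - (a - c * s)) = z + c * z - z / s * a.
  by field; rewrite gt_eqF.
have ks : z / s * s = z by rewrite divfK // gt_eqF.
have k_gt0 : 0 < z / s by rewrite divr_gt0.
set k := z / s in ks k_gt0 *.
move: cz; have [as_|as_] := leP a s; have [acs|acs] := leP a (c * s);
  by case_norm_min_max; nra.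
Qed.

End c_g_h_sz.

Section lebesgue_itv.
Variable R : realType.

Lemma pushforward_shift_lebesgue (c : R) (A : set R) : measurable A ->
  pushforward (@lebesgue_measure R) (fun r : R => r + c) A = lebesgue_measure A.
Proof.
move=> mA; have mshift : measurable_fun setT (fun r : R => r + c).
  by apply: measurable_funD => //; exact: measurable_cst.
have := @lebesgue_measure_unique R
  (pushforward (@lebesgue_measure R) ((fun r : R => r + c) : _ -> measurableTypeR R)).
move=> /(_ mshift) unique; apply/esym; apply: unique => // _ [[a b]] _ <-.
rewrite /pushforward /= [RHS](_ : _ = lebesgue_measure `]a - c, b - c]%classic).
  rewrite !lebesgue_measure_itv /= !lte_fin ltrD2r.
  by case: ifP => // _; rewrite -!EFinB; congr EFin; lra.
congr (lebesgue_measure _); apply/seteqP; split=> r /=;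
  by rewrite !in_itv/= => /andP[? ?]; apply/andP; split; lra.
Qed.

Lemma ge0_integral_itvoc_shift (f : R -> \bar R) (c x y : R) :
  measurable_fun `]x + c, y + c] f -> (forall a, 0 <= f a)%E ->
  (\int[lebesgue_measure]_(a in `](x + c)%R, (y + c)%R]) f a =
   \int[lebesgue_measure]_(a in `]x, y]) f (a + c)%R)%E.
Proof.
move=> mf f_ge0; have mshift : measurable_fun setT (fun r : R => r + c).
  by apply: measurable_funD => //; exact: measurable_cst.
have -> : `]x, y]%classic = (fun r : R => r + c) @^-1` `]x + c, y + c]%classic.
  apply/seteqP; split=> r /=; rewrite !in_itv/= => /andP[? ?]; apply/andP; split; lra.
rewrite -(@ge0_integral_pushforward _ _ (measurableTypeR R) (measurableTypeR R) R
  (fun r => (r + c)%R) mshift lebesgue_measure _ f (measurable_itv _) mf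
  (fun a _ => f_ge0 a)).
apply: eq_measure_integral => A mA _.
change (lebesgue_measure A = lebesgue_measure ((fun r : R => (r + c)%R) @^-1` A)).
by have := pushforward_shift_lebesgue c _ mA; rewrite /pushforward => ->.
Qed.

Lemma disj_itvcc_itvoc (x y w : R) : [disjoint `[x, y]%classic & `]y, w]%classic].
Proof.
rewrite disj_set2E; apply/eqP/seteqP; split => a //=; rewrite !in_itv /=.
by move=> [/andP[_ ?] /andP[? _]]; lra.
Qed.

Lemma integral_cst_itv (b1 b2 : bool) (x y : R) (k : \bar R) : x <= y ->
  (\int[lebesgue_measure]_(a in [set` Interval (BSide b1 x) (BSide b2 y)]) cst k a
   = k * (y - x)%:E)%E.
Proof.
move=> xy; rewrite integral_cst //= lebesgue_measure_itv /= lte_fin.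
case: ltP => [//|yx]; rewrite (_ : y = x); first by rewrite subrr mule0.
by apply/eqP; rewrite eq_le yx xy.
Qed.

Lemma eq_integral_itvcc (f g : R -> \bar R) (x y : R) :
  measurable_fun `[x, y[ f -> {in `[x, y[%classic, f =1 g} ->
  (\int[lebesgue_measure]_(a in `[x, y]) f a = \int[lebesgue_measure]_(a in `[x, y]) g a)%E.
Proof.
move=> mf fg; have mg : measurable_fun `[x, y[ g by exact: eq_measurable_fun fg mf.
by rewrite -(integral_itv_bndo_bndc mf) -(integral_itv_bndo_bndc mg); exact: eq_integral.
Qed.

End lebesgue_itv.

Section residence_integrals.
Variables (R : realType) (rho : R -> R).
Hypothesis rho_lt1 : forall x, rho x < 1.
Hypothesis rho_nondecreasing : forall x y, x <= y -> rho x <= rho y.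

Lemma inv_1B_ge0 x : (0 <= ((1 - rho x)^-1)%:E)%E.
Proof. by rewrite lee_fin ltW // invr_gt0 subr_gt0. Qed.

Lemma measurable_fun_inv_1B_comp (k : R -> R) (D : set R) : measurable D ->
  (forall x y, x <= y -> k y <= k x) ->
  measurable_fun D (fun a => ((1 - rho (k a))^-1)%:E).
Proof.
move=> mD k_noninc; apply/measurable_EFinP.
apply: nonincreasing_measurable => // x y xy.
by rewrite lef_pV2 ?posrE ?subr_gt0 // lerB // rho_nondecreasing // k_noninc.
Qed.

Lemma integral_g_sz (s z : R) : 0 < s -> 0 < z -> rho 0 = 0 ->
  (\int[lebesgue_measure]_(a in `[0%R, t_sz s z]) ((1 - rho (g_sz s z a))^-1)%:E =
   \int[lebesgue_measure]_(a in `[0%R, s])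
      ((1 - rho (worst_rank SRPT_B s z a))^-1)%:E + (c_sz s z * s)%:E)%E.
Proof.
move=> s_gt0 z_gt0 rho0.
have cs_ge0 : 0 <= c_sz s z * s by rewrite mulr_ge0 ?c_sz_ge0 // ltW.
have mg (D : set R) : measurable D ->
    measurable_fun D (fun a => ((1 - rho (g_sz s z a))^-1)%:E).
  by move=> mD; apply: measurable_fun_inv_1B_comp => // x y; exact: g_sz_nonincreasing.
rewrite /t_sz (_ : (1 + c_sz s z) * s = s + c_sz s z * s); last by ring.
rewrite (@itv_bndbnd_setU _ _ _ (BRight s)) ?bnd_simp ?lerDl ?(ltW s_gt0) //.
rewrite ge0_integral_setU //; last 3 first.
- by apply: mg; exact: measurableU.
- by move=> a _; exact: inv_1B_ge0.
- exact: disj_itvcc_itvoc.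
have -> : (\int[lebesgue_measure]_(a in `]s, (s + c_sz s z * s)%R])
    ((1 - rho (g_sz s z a))^-1)%:E = (c_sz s z * s)%:E)%E.
  rewrite (eq_integral (cst 1%:E)); last first.
    move=> a; rewrite inE /= in_itv /= => /andP[s_lt_a _].
    by rewrite /g_sz leNgt s_lt_a /= rho0 subr0 invr1.
  by rewrite integral_cst_itv ?lerDl // mul1e addrAC subrr add0r.
congr (_ + _)%E; apply: eq_integral_itvcc; first exact: mg.
move=> a; rewrite inE /= in_itv /= => /andP[a_ge0 a_lt_s].
by rewrite worst_rank_SRPT_B ?a_ge0 // /g_sz (ltW a_lt_s).
Qed.

Lemma integral_h_sz (s z : R) : 0 < s -> 0 < z ->
  (\int[lebesgue_measure]_(a in `[0%R, t_sz s z]) ((1 - rho (h_sz s z a))^-1)%:E =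
   \int[lebesgue_measure]_(a in `[0%R, s])
      ((1 - rho (worst_rank SRPT_SE s z a))^-1)%:E +
   (c_sz s z)%:E * \int[lebesgue_measure]_(a in `[0%R, s])
      ((1 - rho (worst_rank PSJF_E s z a))^-1)%:E)%E.
Proof.
move=> s_gt0 z_gt0.
have cs_ge0 : 0 <= c_sz s z * s by rewrite mulr_ge0 ?c_sz_ge0 // ltW.
have mSE (D : set R) : measurable D ->
    measurable_fun D (fun a => ((1 - rho (z / s * (s - a)))^-1)%:E).
  move=> mD; apply: measurable_fun_inv_1B_comp => // x y xy.
  by apply: ler_wpM2l; [rewrite divr_ge0 // ltW | lra].
have mh (D : set R) : measurable D ->
    measurable_fun D (fun a => ((1 - rho (h_sz s z a))^-1)%:E).
  by move=> mD; apply: measurable_fun_inv_1B_comp => // x y; exact: h_sz_nonincreasing.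
set Fz := (1 - rho z)^-1.
have PSJF : (\int[lebesgue_measure]_(a in `[0%R, s])
    ((1 - rho (worst_rank PSJF_E s z a))^-1)%:E = (Fz * s)%:E)%E.
  rewrite -(@eq_integral_itvcc _ (cst Fz%:E)) ?integral_cst_itv ?subr0 ?ltW //.
  move=> a; rewrite inE /= in_itv /= => /andP[_ a_lt_s].
  by rewrite worst_rank_PSJF_E.
rewrite /t_sz (_ : (1 + c_sz s z) * s = s + c_sz s z * s); last by ring.
rewrite (@itv_bndbnd_setU _ _ _ (BRight (c_sz s z * s))) ?bnd_simp ?lerDr ?(ltW s_gt0) //.
rewrite ge0_integral_setU //; last 3 first.
- by apply: mh; exact: measurableU.
- by move=> a _; exact: inv_1B_ge0.
- exact: disj_itvcc_itvoc.
have -> : (\int[lebesgue_measure]_(a in `[0%R, (c_sz s z * s)%R])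
    ((1 - rho (h_sz s z a))^-1)%:E = (Fz * (c_sz s z * s))%:E)%E.
  rewrite (eq_integral (cst Fz%:E)); last first.
    by move=> a; rewrite inE /= in_itv /= => /andP[_ a_le_cs]; rewrite /h_sz a_le_cs.
  by rewrite integral_cst_itv // subr0 -EFinM.
have -> : (\int[lebesgue_measure]_(a in `](c_sz s z * s)%R, (s + c_sz s z * s)%R])
    ((1 - rho (h_sz s z a))^-1)%:E =
    \int[lebesgue_measure]_(a in `[0%R, s])
      ((1 - rho (worst_rank SRPT_SE s z a))^-1)%:E)%E.
  rewrite -[X in `]X, _]%classic](add0r (c_sz s z * s)).
  rewrite ge0_integral_itvoc_shift; last 2 first.
  - exact: mh.
  - by move=> a; exact: inv_1B_ge0.
  transitivity (\int[lebesgue_measure]_(a in `]0%R, s])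
      ((1 - rho (z / s * (s - a)))^-1)%:E)%E.
    apply: eq_integral => a; rewrite inE /= in_itv /= => /andP[a_gt0 _].
    by rewrite /h_sz gerDr leNgt a_gt0 /= addrK.
  rewrite integral_itv_obnd_cbnd; last exact: mSE.
  apply: eq_integral_itvcc; first exact: mSE.
  move=> a; rewrite inE /= in_itv /= => /andP[_ a_lt_s].
  by rewrite worst_rank_SRPT_SE.
rewrite PSJF addeC -EFinM; congr (_ + EFin _); ring.
Qed.

End residence_integrals.

Theorem mainTheorem6 (R : realType) (mu : probability (R * R)%type R) (lam : R)
  (lam_gt0 : 0 < lam)
  (dens : has_joint_density mu)
  (S_pos : mu [set p : R * R | p.1 <= 0] = 0%E)
  (Z_pos : mu [set p : R * R | p.2 <= 0] = 0%E)
  (rho_lt1 : (lam%:E * \int[mu]_(p in setT) (p.1)%:E < 1%:E)%E)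
  (s z : R) (s_gt0 : 0 < s) (z_gt0 : 0 < z) :
  [/\ (\int[lebesgue_measure]_(a in `[0%R, t_sz s z]%classic)
         ((1 - rhoZ mu lam (g_sz s z a))^-1)%:E
       = ETres mu lam SRPT_B s z + (c_sz s z * s)%:E)%E,
      (\int[lebesgue_measure]_(a in `[0%R, t_sz s z]%classic)
         ((1 - rhoZ mu lam (h_sz s z a))^-1)%:E
       = ETres mu lam SRPT_SE s z + (c_sz s z)%:E * ETres mu lam PSJF_E s z)%E
    & forall a : R, 0 < a < t_sz s z -> g_sz s z a <= h_sz s z a].
Proof.
have rho_lt_one x : rhoZ mu lam x < 1 by apply: rhoZ_lt1.
have rho_mono x y : x <= y -> rhoZ mu lam x <= rhoZ mu lam y.
  by move=> xy; apply: rhoZ_nondecreasing.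
split; rewrite /ETres.
- by apply: integral_g_sz => //; exact: rhoZ0.
- exact: integral_h_sz.
- by move=> a; exact: g_sz_le_h_sz.
Qed.
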